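(* Let $\mathbf{\Pi}=\langle\mathit{PF},\Pi\rangle$ be a multi-valued probabilistic program such that every probability $p_i$ in the declaration of every probabilistic constant is positive. If $\mathrm{SM}''[\mathbf{\Pi}]$ is not empty, then for every interpretation $I$, $P''_{\mathbf{\Pi}}(I)=P_{T(\mathbf{\Pi})}(I)$.
   Context: Stable model semantics: a formula is negative if every atom occurrence is in the scope of negation; a rule has the form $A\leftarrow B\wedge N$ ($A$ a possibly empty disjunction of atoms, $B$ a conjunction of atoms, $N$ a negative formula); the reduct $\Pi^I$ of a ground program consists of $A\leftarrow B$ for rules with $I\models N$, and $I$ (a set of atoms) is a stable model if it is a minimal model of $\Pi^I$. An $\mathrm{LP}^{\mathrm{MLN}}$ program is a finite set of weighted rules $w:R$ ($w$ real or the symbol $\alpha$); $\Pi_I=\{w:R\mid I\models R\}$; $\mathrm{SM}[\Pi]=\{I\mid I$ stable model of the unweighted $\Pi_I\}$; $W_\Pi(I)=\exp(\sum_{w:R\in\Pi_I}w)$ if $I\in\mathrm{SM}[\Pi]$, else $0$; $P_\Pi(I)=\lim_{\alpha\to\infty}W_\Pi(I)/\sum_{J\in\mathrm{SM}[\Pi]}W_\Pi(J)$. Multi-valued signature: a finite set of constants $c$, each with a finite domain $\mathrm{Dom}(c)$; the propositional atoms are $c=v$ for $v\in\mathrm{Dom}(c)$ (''='' is part of the symbol). Constants are divided into probabilistic and regular. A multi-valued probabilistic program $\mathbf{\Pi}=\langle\mathit{PF},\Pi\rangle$: $\mathit{PF}$ contains, for each probabilistic constant $c$, one declaration $p_1:c=v_1\mid\dots\mid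 p_n:c=v_n$ with $\{v_1,\dots,v_n\}=\mathrm{Dom}(c)$ distinct, $0\le p_i\le1$, $\sum_i p_i=1$; write $M_{\mathbf{\Pi}}(c=v_i)=p_i$. $\Pi$ is a set of rules whose heads contain no atom of a probabilistic constant. $T(\mathbf{\Pi})$ is the $\mathrm{LP}^{\mathrm{MLN}}$ program containing: for each declaration and each $i$, $\ln(p_i):c=v_i$ if $0<p_i<1$, $\alpha:c=v_i$ if $p_i=1$, $\alpha:\bot\leftarrow c=v_i$ if $p_i=0$; $\alpha:R$ for each $R\in\Pi$; $\alpha:\bot\leftarrow c=v_1\wedge c=v_2$ for every constant $c$ and distinct $v_1,v_2\in\mathrm{Dom}(c)$; and $\alpha:\bot\leftarrow\neg\bigvee_{v\in\mathrm{Dom}(c)}c=v$ for every probabilistic constant $c$. An interpretation is consistent if it satisfies the last two kinds of constraints. For consistent $I$, $\mathit{TC}(I)=\{c=v\in I\mid c$ probabilistic$\}$. $\mathrm{SM}''[\mathbf{\Pi}]$ is the set of consistent $I$ that are stable models of $\Pi\cup\mathit{TC}(I)$. $W''_{\mathbf{\Pi}}(I)=\prod_{c=v\in\mathit{TC}(I)}M_{\mathbf{\Pi}}(c=v)$ if $I\in\mathrm{SM}''[\mathbf{\Pi}]$, else $0$; $P''_{\mathbf{\Pi}}(I)=W''_{\mathbf{\Pi}}(I)/\sum_{J\in\mathrm{SM}''[\mathbf{\Pi}]}W''_{\mathbf{\Pi}}(J)$. *)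

From HB Require Import structures.
From mathcomp Require Import all_boot all_order all_algebra.
From mathcomp Require Import all_classical all_reals all_analysis.
Set Implicit Arguments. Unset Strict Implicit. Unset Printing Implicit Defensive.
Import Order.TTheory GRing.Theory Num.Theory.
Local Open Scope ring_scope.

Section StableModels.
Variable A : finType.

Inductive form :=
| FAtom of A
| FBot
| FNeg of form
| FAnd of form & form
| FOr of form & form
| FImp of form & form.

Fixpoint sat (I : {set A}) (f : form) : bool :=
  match f with
  | FAtom a => a \in I
  | FBot => false
  | FNeg g => ~~ sat I g
  | FAnd g h => sat I g && sat I h
  | FOr g h => sat I g || sat I h
  | FImp g h => sat I g ==> sat I h
  end.

Definition FTop : form := FNeg FBot.

Fixpoint negative (f : form) : bool :=
  match f with
  | FAtom _ => false
  | FBot => true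
  | FNeg _ => true
  | FAnd g h | FOr g h | FImp g h => negative g && negative h
  end.

(* rule  A <- B /\ N : head = disjunction of atoms (possibly empty),
   pbody = conjunction of atoms, nbody = N (a negative formula) *)
Record rule := Rule { head : seq A; pbody : seq A; nbody : form }.

Definition rule_wf (r : rule) : bool := negative (nbody r).

Definition sat_rule (I : {set A}) (r : rule) : bool :=
  (all (fun a => a \in I) (pbody r) && sat I (nbody r))
    ==> has (fun a => a \in I) (head r).

(* positive rule  A <- B  as a pair (A, B) *)
Definition prule := (seq A * seq A)%type.

Definition sat_prule (I : {set A}) (r : prule) : bool :=
  all (fun a => a \in I) r.2 ==> has (fun a => a \in I) r.1.

Definition pmodel (P : seq prule) (I : {set A}) : bool := all (sat_prule I) P.

Definition minimal_model (P : seq prule) (I : {set A}) : bool :=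
  pmodel P I && [forall J : {set A}, (J \proper I) ==> ~~ pmodel P J].

Definition reduct (Pi : seq rule) (I : {set A}) : seq prule :=
  [seq (head r, pbody r) | r <- Pi & sat I (nbody r)].

Definition stable_model (Pi : seq rule) (I : {set A}) : bool :=
  minimal_model (reduct Pi I) I.

End StableModels.
Arguments FTop {A}.
Arguments FBot {A}.

Inductive weight (R : Type) := WReal of R | WAlpha.
Arguments WAlpha {R}.

Section LPMLN.
Variables (R : realType) (A : finType).

Definition wprog := seq (weight R * rule A).

Definition sat_part (Pi : wprog) (I : {set A}) : seq (rule A) :=
  [seq wr.2 | wr <- Pi & sat_rule I wr.2].

Definition SM (Pi : wprog) : {set {set A}} :=
  [set I | stable_model (sat_part Pi I) I].

(* value of a weight when the symbol alpha is instantiated by [alpha] *)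
Definition wval (alpha : R) (w : weight R) : R :=
  match w with WReal r => r | WAlpha => alpha end.

Definition W_mln (alpha : R) (Pi : wprog) (I : {set A}) : R :=
  if I \in SM Pi then expR (\sum_(wr <- Pi | sat_rule I wr.2) wval alpha wr.1)
  else 0.

(* W_Pi(I) / sum_{J in SM[Pi]} W_Pi(J), as a function of alpha;
   P_Pi(I) is its limit as alpha -> +oo *)
Definition P_mln_alpha (Pi : wprog) (I : {set A}) (alpha : R) : R :=
  W_mln alpha Pi I / \sum_(J in SM Pi) W_mln alpha Pi J.

End LPMLN.

(* Atoms are elements of the finType A; [cst a] is the constant c of the atom
   a, which is read as "c = a", so Dom(c) = {a | cst a = c}.  [prob] marks the
   probabilistic constants, and [M a] is the probability p_i attached to the
   atom a (for a probabilistic constant) by the declaration in PF. *)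
Section MultiValued.
Variables (R : realType) (A C : finType) (cst : A -> C) (prob : pred C)
          (M : A -> R).

Definition valid_decl : Prop :=
  forall c, prob c ->
    (forall a, cst a = c -> 0 <= M a <= 1) /\ \sum_(a | cst a == c) M a = 1.

Definition no_prob_heads (Pi : seq (rule A)) : bool :=
  all (fun r => all (fun a => ~~ prob (cst a)) (head r)) Pi.

Definition fact (a : A) : rule A := Rule [:: a] [::] FTop.

Definition T_decl : wprog R A :=
  [seq (if M a == 1 then (WAlpha, fact a)
        else if M a == 0 then (WAlpha, Rule [::] [:: a] FTop)
        else (WReal (ln (M a)), fact a))
  | a <- enum A & prob (cst a)].

(* the constraints  bot <- c = v1 /\ c = v2  for every constant c and
   distinct v1, v2 in Dom(c) *)
Definition uniq_constraints : seq (rule A) :=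
  [seq Rule [::] [:: p.1; p.2] FTop
  | p <- enum {: A * A} & (cst p.1 == cst p.2) && (p.1 != p.2)].

(* the constraints  bot <- not (\/_{v in Dom(c)} c = v)  for every
   probabilistic constant c *)
Definition exist_constraints : seq (rule A) :=
  [seq Rule [::] [::] (FNeg (foldr (@FOr A) FBot
                               [seq FAtom a | a <- enum A & cst a == c]))
  | c <- enum C & prob c].

Definition T_prog (Pi : seq (rule A)) : wprog R A :=
  T_decl ++ [seq (WAlpha, r) | r <- Pi]
         ++ [seq (WAlpha, r) | r <- uniq_constraints]
         ++ [seq (WAlpha, r) | r <- exist_constraints].

Definition consistent (I : {set A}) : bool :=
  all (sat_rule I) (uniq_constraints ++ exist_constraints).

Definition TC (I : {set A}) : {set A} := [set a in I | prob (cst a)].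

Definition SM2 (Pi : seq (rule A)) : {set {set A}} :=
  [set I | consistent I && stable_model (Pi ++ [seq fact a | a <- enum (TC I)]) I].

Definition W2 (Pi : seq (rule A)) (I : {set A}) : R :=
  if I \in SM2 Pi then \prod_(a in TC I) M a else 0.

Definition P2 (Pi : seq (rule A)) (I : {set A}) : R :=
  W2 Pi I / \sum_(J in SM2 Pi) W2 Pi J.

End MultiValued.

From Pilot Require Import Defs.
From HB Require Import structures.
From mathcomp Require Import all_boot all_order all_algebra.
From mathcomp Require Import all_classical all_reals all_analysis.
From mathcomp Require Import ring lra.
Set Implicit Arguments. Unset Strict Implicit. Unset Printing Implicit Defensive.
Import Order.TTheory GRing.Theory Num.Theory.
Import numFieldNormedType.Exports.
Local Open Scope ring_scope.
Local Open Scope classical_set_scope.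

(* Dividing all LP^MLN weights by exp(alpha N), N the number of alpha-weighted
   rules, leaves each stable model I with weight exp(soft I) exp(-alpha v I),
   where v I counts the hard rules violated by I; as alpha -> +oo only the
   stable models satisfying every hard rule survive, with weight exp(soft I).
   For T(Pi) these are exactly the members of SM''[Pi]: for J included in a
   model I of the hard rules, the reducts of T(Pi)_I and of Pi + TC(I) with
   respect to I have the same models J, because constraints true in I stay
   true in J, and a probability-one atom lies in every consistent I since all
   other values of its constant have positive probability.  Finally
   exp(soft I) is the product of M over TC(I), as only the facts c = v with
   0 < p < 1 carry a real weight, namely ln p. *)

Section ReductFacts.
Variable A : finType.
Implicit Types (X Y : seq (rule A)) (I J : {set A}) (r : rule A).

Definition reduct_sat I J r : bool :=
  sat I (nbody r) ==> sat_prule J (Defs.head r, pbody r).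

Lemma pmodel_reduct X I J : pmodel (reduct X I) J = all (reduct_sat I J) X.
Proof. by rewrite /pmodel /reduct all_map all_filter. Qed.

Lemma reduct_sat_self I r : reduct_sat I I r = sat_rule I r.
Proof.
rewrite /reduct_sat /sat_rule /sat_prule.
by case: (sat _ _); case: (all _ _); case: (has _ _).
Qed.

Lemma stable_model_sat X I : stable_model X I -> all (sat_rule I) X.
Proof.
move=> /andP[+ _]; rewrite pmodel_reduct.
by apply: sub_all => r; rewrite reduct_sat_self.
Qed.

Lemma constraint_reduct_sat I J r :
  Defs.head r = [::] -> J \subset I -> sat_rule I r -> reduct_sat I J r.
Proof.
rewrite /sat_rule /reduct_sat /sat_prule => -> /fintype.subsetP JI /=.
case: (sat I _); rewrite ?andbT ?andbF //= !implybF.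
by apply: contra; apply: sub_all => a /JI.
Qed.

Lemma eq_stable_model X Y I :
  (forall J, J \subset I -> pmodel (reduct X I) J = pmodel (reduct Y I) J) ->
  stable_model X I = stable_model Y I.
Proof.
move=> eqXY; rewrite /stable_model /minimal_model eqXY //.
congr (_ && _); apply: eq_forallb => J.
by case: (boolP (J \proper I)) => // /proper_sub /eqXY ->.
Qed.

Lemma sat_rule_fact I a : sat_rule I (fact a) = (a \in I).
Proof. by rewrite /sat_rule /= orbF. Qed.

Lemma reduct_sat_fact I J a : reduct_sat I J (fact a) = (a \in J).
Proof. by rewrite /reduct_sat /sat_prule /= orbF. Qed.

Lemma sat_big_or I (s : seq A) :
  sat I (foldr (@FOr A) FBot [seq FAtom a | a <- s]) = has (mem I) s.
Proof. by elim: s => //= a s ->. Qed.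

End ReductFacts.

Lemma all_implyb (T : Type) (p q : pred T) (s : seq T) :
  all p s -> all (fun x => p x ==> q x) s = all q s.
Proof. by elim: s => //= x s IH /andP[-> /IH ->]. Qed.

Section LPMLNLimit.
Variables (R : realType) (A : finType) (Pi : wprog R A).
Implicit Types (I J : {set A}) (alpha : R).

Definition is_alpha (w : weight R) : bool := if w is WAlpha then true else false.

Definition hard_sat I : bool := all (fun wr => is_alpha wr.1 ==> sat_rule I wr.2) Pi.

Definition hard_violations I : nat :=
  count (fun wr => is_alpha wr.1 && ~~ sat_rule I wr.2) Pi.

Definition soft_weight I : R := \sum_(wr <- Pi | sat_rule I wr.2) wval 0 wr.1.

Definition penalized_weight alpha I : R :=
  if I \in SM Pi then expR (soft_weight I) * expR (- alpha) ^+ hard_violations I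
  else 0.

Definition limit_weight I : R :=
  if (I \in SM Pi) && hard_sat I then expR (soft_weight I) else 0.

Lemma all_sat_part I (Q : pred (rule A)) :
  all Q (sat_part Pi I) = all (fun wr => sat_rule I wr.2 ==> Q wr.2) Pi.
Proof. by rewrite all_map all_filter. Qed.

Lemma hard_satE I : hard_sat I = (hard_violations I == 0)%N.
Proof.
rewrite /hard_sat /hard_violations eqn0Ngt -has_count -all_predC.
by apply: eq_all => wr /=; case: (is_alpha _); case: (sat_rule _ _).
Qed.

Lemma sum_wval_split (s : wprog R A) (P : pred (weight R * rule A)) alpha :
  \sum_(wr <- s | P wr) wval alpha wr.1 =
    \sum_(wr <- s | P wr) wval 0 wr.1
    + alpha * (count (fun wr => is_alpha wr.1) s)%:R
    - alpha * (count (fun wr => is_alpha wr.1 && ~~ P wr) s)%:R.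
Proof.
elim: s => [|[w r] s IH]; first by rewrite !big_nil mulr0 subr0 addr0.
by rewrite !big_cons /= !natrD IH; case: (P _); case: w => [w|] /=; ring.
Qed.

Lemma W_mln_penalized alpha I :
  W_mln alpha Pi I =
    expR (alpha * (count (fun wr => is_alpha wr.1) Pi)%:R) * penalized_weight alpha I.
Proof.
rewrite /W_mln /penalized_weight; case: ifP => _; last by rewrite mulr0.
rewrite sum_wval_split -expRM_natr -!expRD /soft_weight /hard_violations.
by congr expR; ring.
Qed.

Lemma P_mln_alpha_penalized alpha I :
  P_mln_alpha Pi I alpha = penalized_weight alpha I / \sum_J penalized_weight alpha J.
Proof.
have W0 J : (if J \in SM Pi then W_mln alpha Pi J else 0) = W_mln alpha Pi J.
  by rewrite /W_mln; case: (J \in SM Pi).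
rewrite /P_mln_alpha big_mkcond (eq_bigr _ (fun J _ => W0 J)).
rewrite W_mln_penalized (eq_bigr _ (fun J _ => W_mln_penalized alpha J)) -mulr_sumr.
by rewrite invfM mulrACA mulfV ?mul1r // gt_eqF // expR_gt0.
Qed.

Lemma penalized_weight_cvg I :
  penalized_weight alpha I @[alpha --> +oo] --> limit_weight I.
Proof.
rewrite /penalized_weight /limit_weight hard_satE.
case: (I \in SM Pi) => /=; last exact: cvg_cst.
have -> : (if hard_violations I == 0 then expR (soft_weight I) else 0)
          = expR (soft_weight I) * 0 ^+ hard_violations I.
  by rewrite expr0n; case: eqP; rewrite ?mulr1 ?mulr0.
apply: cvgM; first exact: cvg_cst.
apply: (continuous_cvg _ (@exprn_continuous R _ _)); exact: cvgr_expR.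
Qed.

Lemma limit_weight_ge0 I : 0 <= limit_weight I.
Proof. by rewrite /limit_weight; case: ifP => // _; exact: expR_ge0. Qed.

Theorem P_mln_alpha_cvg I : (exists J, (J \in SM Pi) && hard_sat J) ->
  P_mln_alpha Pi I alpha @[alpha --> +oo] -->
    limit_weight I / \sum_J limit_weight J.
Proof.
move=> [J0 J0hard]; under eq_cvg do rewrite P_mln_alpha_penalized.
apply: cvgM; first exact: penalized_weight_cvg.
apply: cvgV.
  rewrite psumr_neq0 => [|J _]; last exact: limit_weight_ge0.
  apply/hasP; exists J0; first exact: mem_index_enum.
  by rewrite /limit_weight J0hard expR_gt0.
apply: cvg_big => [|J _]; [exact: add_continuous | exact: penalized_weight_cvg].
Qed.

End LPMLNLimit.

Section Translation.
Variables (R : realType) (A C : finType) (cst : A -> C) (prob : pred C) (M : A -> R).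
Variable Pi : seq (rule A).
Hypothesis M_gt0 : forall a, prob (cst a) -> 0 < M a.
Implicit Types (I J : {set A}) (a : A).

Local Notation T := (T_prog cst prob M Pi).
Local Notation TC := (TC cst prob).

Lemma T_declE : T_decl cst prob M =
  [seq (if M a == 1 then WAlpha else WReal (ln (M a)), fact a) | a <- enum A & prob (cst a)].
Proof.
apply/eq_in_map => a; rewrite mem_filter => /andP[pa _].
by rewrite (gt_eqF (M_gt0 pa)); case: ifP.
Qed.

Lemma hard_sat_T I : hard_sat T I =
  [&& all (fun a => (M a == 1) ==> (a \in I)) [seq a <- enum A | prob (cst a)],
      all (sat_rule I) Pi & consistent cst prob I].
Proof.
rewrite /hard_sat /T_prog T_declE !all_cat !all_map /consistent all_cat.
congr [&& _, _ & _ && _]; last by rewrite all_map.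
- by apply: eq_all => a /=; rewrite sat_rule_fact; case: ifP.
- by rewrite all_map.
Qed.

Lemma pmodel_reduct_T I J : hard_sat T I -> J \subset I ->
  pmodel (reduct (sat_part T I) I) J =
  pmodel (reduct (Pi ++ [seq fact a | a <- enum (TC I)]) I) J.
Proof.
rewrite hard_sat_T => /and3P[_ PiI _] JI.
set Q := fun wr : weight R * rule A => sat_rule I wr.2 ==> reduct_sat I J wr.2.
have constraintsJ (s : seq (rule A)) : all (fun r => Defs.head r == [::]) s ->
    all Q [seq (WAlpha, r) | r <- s].
  rewrite all_map; apply: sub_all => r /eqP r_nil; apply/implyP.
  exact: constraint_reduct_sat r_nil JI.
have PiJ : all Q [seq (WAlpha, r) | r <- Pi] = all (reduct_sat I J) Pi.
  by rewrite all_map; exact: all_implyb PiI.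
rewrite !pmodel_reduct all_sat_part /T_prog T_declE !all_cat -/Q PiJ.
rewrite constraintsJ ?constraintsJ ?andbT; last 2 first.
- by rewrite all_map; apply/allP.
- by rewrite all_map; apply/allP.
rewrite andbC !all_map; congr (_ && _).
rewrite (eq_all (a2 := fun a => (a \in I) ==> (a \in J))); last first.
  by move=> a; rewrite /= /Q sat_rule_fact reduct_sat_fact.
rewrite [RHS](eq_all (a2 := fun a => a \in J)) => [|a]; last exact: reduct_sat_fact.
apply/allP/allP => factsJ a.
- rewrite mem_enum inE => /andP[aI pa].
  by apply: implyP aI; apply: factsJ; rewrite mem_filter pa mem_enum.
- rewrite mem_filter mem_enum andbT => pa; apply/implyP => aI.
  by apply: factsJ; rewrite mem_enum inE aI.
Qed.

Lemma SM_T_SM2 I : hard_sat T I -> (I \in SM T) = (I \in SM2 cst prob Pi).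
Proof.
move=> hardI; have := hardI; rewrite hard_sat_T => /and3P[_ _ consI].
rewrite !inE consI; apply: eq_stable_model => J; exact: pmodel_reduct_T.
Qed.

Lemma expR_soft_weight_T I : expR (soft_weight T I) = \prod_(a in TC I) M a.
Proof.
rewrite /soft_weight /T_prog T_declE !big_cat !big_map /= !big1_eq !addr0.
rewrite big_filter_cond expR_sum big_enum_cond /=.
apply: eq_big => [a | a /andP[pa _]]; first by rewrite sat_rule_fact !inE andbC.
by case: eqP => [-> | _]; rewrite ?ln1 ?expR0 // lnK // posrE M_gt0.
Qed.

Hypothesis decl_valid : valid_decl cst prob M.

Lemma consistent_has_value I c : consistent cst prob I -> prob c ->
  exists2 b, cst b = c & b \in I.
Proof.
rewrite /consistent all_cat /exist_constraints all_map => /andP[_ /allP existI] pc.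
have := existI c; rewrite mem_filter pc mem_enum /= => /(_ isT).
rewrite /sat_rule /= sat_big_or implybF negbK => /hasP[b].
by rewrite mem_filter mem_enum andbT => /eqP; exists b.
Qed.

Lemma certain_value_mem I a : consistent cst prob I -> prob (cst a) -> M a = 1 ->
  a \in I.
Proof.
move=> consI pa Ma1; have [b cb bI] := consistent_has_value consI pa.
case: (eqVneq b a) => [<- // | nba]; exfalso.
have [M01 sum1] := decl_valid pa.
have Mb_gt0 : 0 < M b by apply: M_gt0; rewrite cb.
have rest_ge0 : 0 <= \sum_(i | (cst i == cst a) && (i != a) && (i != b)) M i.
  by apply: sumr_ge0 => i /andP[/andP[/eqP ci _] _]; case/andP: (M01 i ci).
move: sum1; rewrite (bigD1 a) //= Ma1 (bigD1 b) /=; last by rewrite cb eqxx nba.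
lra.
Qed.

Lemma SM2_hard_sat I : I \in SM2 cst prob Pi -> hard_sat T I.
Proof.
rewrite inE => /andP[consI stableI]; rewrite hard_sat_T consI andbT.
apply/andP; split.
- apply/allP => a; rewrite mem_filter mem_enum andbT => pa.
  by apply/implyP => /eqP; exact: certain_value_mem.
- by move: (stable_model_sat stableI); rewrite all_cat => /andP[].
Qed.

Lemma SM2E I : (I \in SM2 cst prob Pi) = (I \in SM T) && hard_sat T I.
Proof.
apply/idP/andP => [SM2I | [SMI hardI]]; last by rewrite -SM_T_SM2.
by have hardI := SM2_hard_sat SM2I; rewrite SM_T_SM2.
Qed.

Lemma limit_weight_T_W2 : limit_weight T =1 W2 cst prob M Pi.
Proof. by move=> I; rewrite /limit_weight /W2 SM2E expR_soft_weight_T. Qed.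

End Translation.

Theorem proposition4 (R : realType) (A C : finType) (cst : A -> C)
  (prob : pred C) (M : A -> R) (Pi : seq (rule A)) :
  all (@rule_wf A) Pi ->
  no_prob_heads cst prob Pi ->
  valid_decl cst prob M ->
  (forall a, prob (cst a) -> 0 < M a) ->
  (exists J : {set A}, J \in SM2 cst prob Pi) ->
  forall I : {set A},
    P_mln_alpha (T_prog cst prob M Pi) I alpha @[alpha --> +oo%R] --> (P2 cst prob M Pi I : R).
Proof.
move=> _ _ decl_valid M_gt0 [J0 J0_SM2] I.
have limitE := limit_weight_T_W2 Pi M_gt0 decl_valid.
have sum_W2 : \sum_(J in SM2 cst prob Pi) W2 cst prob M Pi J
              = \sum_J limit_weight (T_prog cst prob M Pi) J.
  by rewrite big_mkcond; apply: eq_bigr => J _; rewrite limitE /W2; case: (J \in _).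
rewrite /P2 sum_W2 -limitE; apply: P_mln_alpha_cvg.
by exists J0; rewrite -(SM2E Pi M_gt0 decl_valid).
Qed.
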